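(* Let $(D_d)_{d\in\mathbb{N}}$ be an arbitrary sequence of open sets $D_d\subset\mathbb{R}^d$ with $\lambda_d(D_d)=1$, let $(L_d)$ be positive numbers and let \[ \overline{C}_d^0(L)=\{f|_{D_d} \mid f\colon\mathbb{R}^d\to\mathbb{R},\ \sup_{x\in\mathbb R^d}|f(x)|\le 1,\ \operatorname{Lip}(f)\le L_d\}. \] Then \[ n\bigl(\varepsilon,\overline{C}_d^0(L)\bigr)\ge (1-a\varepsilon)\Bigl(\frac{aL_d\sqrt d}{3\sqrt{2e\pi}}\Bigr)^d \] for all $a\ge1$, $\varepsilon\in(0,1/a)$ and $d\in\mathbb{N}$. Consequently, the curse of dimensionality holds for $(\overline{C}_d^0(L))_d$ if $\limsup_{d\to\infty}L_d\sqrt d>0$.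
   Context: $\operatorname{Lip}(f)=\sup_{x\ne y}|f(x)-f(y)|/\|x-y\|_2$. Integration problem: approximate $S_d(f)=\int_{D_d}f(x)\,dx$ for $f\in F_d$ by algorithms $A_{n,d}(f)=\phi_{n,d}(f(x_1),\dots,f(x_n))$ with points $x_j\in D_d$ possibly adaptively chosen and arbitrary $\phi_{n,d}\colon\mathbb R^n\to\mathbb R$. Worst-case error $e(A_{n,d})=\sup_{f\in F_d}|S_d(f)-A_{n,d}(f)|$; information complexity $n(\varepsilon,F_d)$ is the minimal $n$ such that some $A_{n,d}$ has error $\le\varepsilon$. The curse of dimensionality holds if there exist $c,\varepsilon_0,\gamma>0$ with $n(\varepsilon,F_d)\ge c(1+\gamma)^d$ for all $\varepsilon\le\varepsilon_0$ and infinitely many $d$. *)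

From HB Require Import structures.
From mathcomp Require Import all_boot all_order all_algebra.
From mathcomp Require Import all_classical all_reals all_analysis.
Set Implicit Arguments. Unset Strict Implicit. Unset Printing Implicit Defensive.
Import Order.TTheory GRing.Theory Num.Theory.
Local Open Scope classical_set_scope.
Local Open Scope ring_scope.

Section Defs.
Variable R : realType.

(* Points of R^d are d-tuples of reals (with the product Borel sigma-algebra). *)

Definition eucl_dist (d : nat) (x y : d.-tuple R) : R :=
  Num.sqrt (\sum_(i < d) (tnth x i - tnth y i) ^+ 2).

Definition eucl_open (d : nat) (D : set (d.-tuple R)) : Prop :=
  forall x, D x -> exists2 r : R, 0 < r & forall y, eucl_dist x y < r -> D y.

(* d-dimensional Lebesgue measure, built as the iterated product of the
   one-dimensional Lebesgue measure:  lambda_0 = Dirac mass at the empty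
   tuple,  lambda_{d+1}(A) = \int lambda_d {t | x :: t \in A} dx. *)
Fixpoint lebesgue_d (d : nat) : set (d.-tuple R) -> \bar R :=
  match d with
  | 0 => fun A => (\1_A [tuple] : R)%:E
  | d'.+1 => fun A =>
      (\int[@lebesgue_measure R]_x
          @lebesgue_d d' [set t : d'.-tuple R | A [tuple of x :: t]])%E
  end.

Definition lip_le (d : nat) (f : d.-tuple R -> R) (L : R) : Prop :=
  forall x y, `|f x - f y| <= L * eucl_dist x y.

(* The class  \bar C^0_d(L): functions f : R^d -> R with sup |f| <= 1 and
   Lip(f) <= L (they are only ever evaluated / integrated on D). *)
Definition lip_class (d : nat) (L : R) : set (d.-tuple R -> R) :=
  [set f | (forall x, `|f x| <= 1) /\ lip_le f L].

Definition S_int (d : nat) (D : set (d.-tuple R)) (f : d.-tuple R -> R)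
  : \bar R := (\int[@lebesgue_d d]_(x in D) (f x)%:E)%E.

(* Information obtained by an adaptive algorithm: the k-th node is
   pts k (f(x_1), ..., f(x_k)), a function of the previously computed values. *)
Fixpoint info (T : Type) (pts : nat -> seq R -> T) (f : T -> R) (k : nat)
  : seq R :=
  match k with
  | 0 => [::]
  | k'.+1 => let s := info pts f k' in rcons s (f (pts k' s))
  end.

Definition alg (T : Type) (n : nat) (pts : nat -> seq R -> T)
  (phi : seq R -> R) (f : T -> R) : R := phi (info pts f n).

Definition wc_error (T : Type) (F : set (T -> R)) (S : (T -> R) -> \bar R)
  (n : nat) (pts : nat -> seq R -> T) (phi : seq R -> R) : \bar R :=
  ereal_sup [set (`| S f - (alg n pts phi f)%:E |)%E | f in F].

(* Information complexity n(eps, F): the minimal n for which some algorithm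
   using n (adaptively chosen) points of D has error <= eps
   (= +oo if there is no such n). *)
Definition info_complexity (T : Type) (D : set T) (F : set (T -> R))
  (S : (T -> R) -> \bar R) (eps : R) : \bar R :=
  ereal_inf [set (n%:R)%:E | n in
    [set n : nat | exists pts : nat -> seq R -> T, exists phi : seq R -> R,
       (forall k s, D (pts k s)) /\ (wc_error F S n pts phi <= eps%:E)%E]].

End Defs.

From HB Require Import structures.
From mathcomp Require Import all_boot all_order all_algebra.
From mathcomp Require Import all_classical all_reals all_analysis.
From mathcomp Require Import measurable_realfun.
From mathcomp.algebra_tactics Require Import ring lra.
Set Implicit Arguments. Unset Strict Implicit. Unset Printing Implicit Defensive.
Import Order.TTheory GRing.Theory Num.Theory.
Local Open Scope classical_set_scope.
Local Open Scope ring_scope.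

(* Adversary argument.  Run an algorithm on the zero function and let z_0, ..., z_(n-1)
   be the nodes it queries.  With t = 1/a, the function
   f = min (t, L * min_j |x - z_j|) and -f both lie in the class and yield the same
   information as 0, so the error is at least \int_D f.  This integral is at least t
   minus t times the volume of the balls B(z_j, t/L); bounding the indicator of each
   ball by a Gaussian bump of width (t/L)/sqrt d bounds that volume by
   n (sqrt(2 e pi) t / (L sqrt d))^d, and the first claim follows.  If L_d sqrt d
   exceeds some c > 0 infinitely often, a large enough a makes the base of the power
   at least 2 along those d, which is the curse of dimensionality. *)

Section tuple_lebesgue.
Context (R : realType).

Section cons_measure.
Context (n : nat) (mu : {sigma_finite_measure set (n.-tuple R) -> \bar R}).

Definition cons_tuple (p : measurableTypeR R * n.-tuple R) : n.+1.-tuple R :=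
  [tuple of p.1 :: p.2].

Definition uncons_tuple (t : n.+1.-tuple R) : measurableTypeR R * n.-tuple R :=
  (thead t, [tuple of behead t]).

Lemma measurable_cons_tuple : measurable_fun setT cons_tuple.
Proof. exact: measurable_cons. Qed.

Lemma measurable_uncons_tuple : measurable_fun setT uncons_tuple.
Proof. apply: measurable_fun_pair; [exact: measurable_tnth | exact: measurable_behead]. Qed.

Definition cons_measure := pushforward (@lebesgue_measure R \x mu)%E cons_tuple.

(* The library's measure instance on [pushforward] depends on the measurability
   of the map, so it cannot be found by inference. *)
HB.instance Definition _ := Measure.copy cons_measure
  (measure_function_pushforward__canonical__measure_function_Measure _
     measurable_cons_tuple).

Let cons_measure_sigma_finite : sigma_finite setT cons_measure.
Proof.
have /sigma_finiteP[F [TF ndF Ffin]] := sigma_finiteT (@lebesgue_measure R).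
have /sigma_finiteP[G [TG ndG Gfin]] := sigma_finiteT mu.
exists (fun k => uncons_tuple @^-1` (F k `*` G k)).
  apply/seteqP; split => // t _.
  have [[i _ Fi] [j _ Gj]] :
      (\bigcup_k F k) (thead t) /\ (\bigcup_k G k) [tuple of behead t].
    by rewrite -TF -TG.
  exists (maxn i j) => //; split.
  - exact: subsetPset (ndF _ _ (leq_maxl i j)) _ Fi.
  - exact: subsetPset (ndG _ _ (leq_maxr i j)) _ Gj.
move=> k; have [mF Fk] := Ffin k; have [mG Gk] := Gfin k; split.
  rewrite -[X in measurable X]setTI.
  by apply: measurable_uncons_tuple => //; exact: measurableX.
rewrite /cons_measure /pushforward (_ : _ @^-1` _ = F k `*` G k).
  by rewrite product_measure1E // lte_mul_pinfty // ge0_fin_numE.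
by apply/funext => -[x t]; congr (_ /\ G k _); exact: val_inj.
Qed.

HB.instance Definition _ :=
  Measure_isSigmaFinite.Build _ _ _ cons_measure cons_measure_sigma_finite.

End cons_measure.

Fixpoint tuple_lebesgue (d : nat) : {sigma_finite_measure set (d.-tuple R) -> \bar R} :=
  match d with
  | 0 => [the {sigma_finite_measure set _ -> \bar R} of @dirac _ _ [tuple] R]
  | d'.+1 =>
      [the {sigma_finite_measure set _ -> \bar R} of cons_measure (tuple_lebesgue d')]
  end.

Lemma tuple_lebesgueE d : tuple_lebesgue d = @lebesgue_d R d :> (set _ -> \bar R).
Proof.
elim: d => [|d IH]; apply/funext => A //=.
rewrite /cons_measure /pushforward /product_measure1 /= IH.
apply: eq_integral => x _; congr lebesgue_d.
by apply/seteqP; split => t; rewrite /xsection /= inE.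
Qed.

End tuple_lebesgue.

Section gauss_tuple.
Context (R : realType).

Lemma integral_normal_fun (m s : R) : s != 0 ->
  (\int[@lebesgue_measure R]_x (normal_fun m s x)%:E = (normal_peak s)^-1%:E)%E.
Proof.
move=> s0; have peak0 : normal_peak s != 0 by rewrite gt_eqF // normal_peak_gt0.
under eq_integral => x _.
  rewrite (_ : normal_fun m s x = (normal_peak s)^-1 * normal_pdf m s x); last first.
    by rewrite normal_pdfE // mulKf.
  rewrite EFinM; over.
rewrite ge0_integralZl_EFin ?integral_normal_pdf ?mule1 //.
- by move=> x _; rewrite lee_fin normal_pdf_ge0.
- by apply/measurable_EFinP; exact: measurable_normal_pdf.
- by rewrite invr_ge0 normal_peak_ge0.
Qed.

Definition gauss_tuple d (c : d.-tuple R) (s : R) (x : d.-tuple R) : R :=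
  \prod_(i < d) normal_fun (tnth c i) s (tnth x i).

Lemma gauss_tuple_ge0 d (c : d.-tuple R) s x : 0 <= gauss_tuple c s x.
Proof. by apply: prodr_ge0 => i _; exact: normal_fun_ge0. Qed.

Lemma measurable_gauss_tuple d (c : d.-tuple R) s :
  measurable_fun setT (gauss_tuple c s).
Proof.
apply: measurable_prod => i _.
exact: measurableT_comp (measurable_normal_fun _ _) (measurable_tnth _).
Qed.

Lemma gauss_tuple_cons d m (c : d.-tuple R) s x (t : d.-tuple R) :
  gauss_tuple [tuple of m :: c] s [tuple of x :: t] = normal_fun m s x * gauss_tuple c s t.
Proof.
rewrite /gauss_tuple big_ord_recl; congr (_ * _).
by apply: eq_bigr => i _; rewrite !tnthS.
Qed.

Lemma integral_gauss_tuple d (c : d.-tuple R) s : s != 0 ->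
  (\int[tuple_lebesgue R d]_x (gauss_tuple c s x)%:E = ((normal_peak s)^-1 ^+ d)%:E)%E.
Proof.
move=> s0; elim: d c => [|d IH] c.
  under eq_integral do rewrite /gauss_tuple big_ord0.
  by rewrite integral_cst //= diracT mul1e.
case/tupleP: c => m c.
have mg := measurable_gauss_tuple.
rewrite [LHS](ge0_integral_pushforward (@measurable_cons_tuple R d)) //; first last.
- by move=> y _; rewrite lee_fin gauss_tuple_ge0.
- by apply/measurable_EFinP; exact: mg.
rewrite fubini_tonelli1 //; first last.
- by move=> p; rewrite lee_fin gauss_tuple_ge0.
- apply/measurable_EFinP; apply: measurableT_comp; first exact: mg.
  exact: measurable_cons_tuple.
rewrite /fubini_F; under eq_integral => x _.
  under eq_integral do rewrite /cons_tuple /= gauss_tuple_cons EFinM.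
  rewrite ge0_integralZl_EFin ?IH ?normal_fun_ge0 //; last first.
  - by apply/measurable_EFinP; exact: mg.
  - by move=> y _; rewrite lee_fin gauss_tuple_ge0.
  rewrite muleC; over.
rewrite ge0_integralZl_EFin ?integral_normal_fun ?exprn_ge0 ?invr_ge0 ?normal_peak_ge0 //.
- by rewrite -EFinM exprS mulrC.
- by move=> y _; rewrite lee_fin normal_fun_ge0.
- by apply/measurable_EFinP; exact: measurable_normal_fun.
Qed.

End gauss_tuple.

Lemma cauchy_schwarz_sum (R : rcfType) (I : finType) (a b : I -> R) :
  \sum_i a i * b i <= Num.sqrt (\sum_i a i ^+ 2) * Num.sqrt (\sum_i b i ^+ 2).
Proof.
set A := \sum_i a i ^+ 2; set B := \sum_i b i ^+ 2; set S := \sum_i a i * b i.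
have A0 : 0 <= A by apply: sumr_ge0 => i _; exact: sqr_ge0.
have B0 : 0 <= B by apply: sumr_ge0 => i _; exact: sqr_ge0.
have lagrange : \sum_i \sum_j (a i * b j - a j * b i) ^+ 2 = (A * B - S ^+ 2) *+ 2.
  have sq i j : (a i * b j - a j * b i) ^+ 2 =
      a i ^+ 2 * b j ^+ 2 + a j ^+ 2 * b i ^+ 2 - 2 * (a i * b i * (a j * b j)).
    by ring.
  under eq_bigr do under eq_bigr do rewrite sq.
  under eq_bigr do rewrite sumrB big_split /=.
  rewrite sumrB big_split /= [X in _ + X - _]exchange_big /=.
  have -> : \sum_i \sum_j a i ^+ 2 * b j ^+ 2 = A * B.
    by rewrite mulr_suml; apply: eq_bigr => i _; rewrite mulr_sumr.
  have -> : \sum_i \sum_j 2 * (a i * b i * (a j * b j)) = 2 * S ^+ 2.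
    rewrite expr2 mulr_suml mulr_sumr; apply: eq_bigr => i _.
    by rewrite mulr_sumr mulr_sumr.
  by rewrite mulr2n; ring.
have S2 : S ^+ 2 <= A * B.
  rewrite -subr_ge0 -(pmulrn_lge0 _ (ltn0Sn 1)) -lagrange.
  by apply: sumr_ge0 => i _; apply: sumr_ge0 => j _; exact: sqr_ge0.
rewrite -sqrtrM // (le_trans (ler_norm S)) // -sqrtr_sqr ler_sqrt //.
exact: mulr_ge0.
Qed.

Section eucl_dist.
Context (R : realType) (d : nat).
Implicit Types x y z : d.-tuple R.

Lemma eucl_dist_ge0 x y : 0 <= eucl_dist x y.
Proof. exact: sqrtr_ge0. Qed.

Lemma eucl_distxx x : eucl_dist x x = 0.
Proof. by rewrite /eucl_dist big1 ?sqrtr0 // => i _; rewrite subrr expr0n. Qed.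

Lemma eucl_distC x y : eucl_dist x y = eucl_dist y x.
Proof.
by rewrite /eucl_dist; congr Num.sqrt; apply: eq_bigr => i _; rewrite -sqrrN opprB.
Qed.

Lemma eucl_dist_triangle x y z : eucl_dist x z <= eucl_dist x y + eucl_dist y z.
Proof.
rewrite /eucl_dist.
set a := fun i => tnth x i - tnth y i; set b := fun i => tnth y i - tnth z i.
have -> : \sum_i (tnth x i - tnth z i) ^+ 2 = \sum_i (a i + b i) ^+ 2.
  by apply: eq_bigr => i _; congr (_ ^+ 2); rewrite /a /b addrA subrK.
rewrite -[leRHS]ger0_norm ?addr_ge0 ?sqrtr_ge0 // -sqrtr_sqr ler_sqrt ?sqr_ge0 //.
rewrite sqrrD !sqr_sqrtr ?sumr_ge0 // => [|i _|i _]; last 2 first.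
- exact: sqr_ge0.
- exact: sqr_ge0.
have -> : \sum_i (a i + b i) ^+ 2
          = \sum_i a i ^+ 2 + (\sum_i a i * b i) *+ 2 + \sum_i b i ^+ 2.
  by rewrite -sumrMnl -!big_split; apply: eq_bigr => i _; rewrite sqrrD.
by rewrite lerD2r lerD2l lerMn2r cauchy_schwarz_sum.
Qed.

Lemma eucl_dist_lip x y z : `|eucl_dist x z - eucl_dist y z| <= eucl_dist x y.
Proof.
have := eucl_dist_triangle x y z; have := eucl_dist_triangle y x z.
rewrite (eucl_distC y x) ler_norml; lra.
Qed.

Lemma measurable_eucl_dist z : measurable_fun setT (fun x => eucl_dist x z).
Proof.
apply: measurableT_comp.
  by apply: continuous_measurable_fun; exact: sqrt_continuous.
apply: measurable_sum => i; apply: measurable_funX; apply: measurable_funB => //.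
exact: measurable_tnth.
Qed.

End eucl_dist.

Section eucl_open_measurable.
Context (R : realType) (d : nat).

Definition grid_box (k : d.-tuple int) (m : nat) : set (d.-tuple R) :=
  \bigcap_(i in [set: 'I_d])
     ((@tnth d R)^~ i @^-1` `[(tnth k i)%:~R / m.+1%:R, (tnth k i + 1)%:~R / m.+1%:R[).

Lemma measurable_grid_box k m : measurable (grid_box k m).
Proof.
apply: fin_bigcap_measurable; first exact: finite_finset.
move=> i _; rewrite -[X in measurable X]setTI.
by apply: measurable_tnth => //; exact: measurable_itv.
Qed.

Lemma grid_box_floor (x : d.-tuple R) m :
  grid_box [tuple Num.floor (tnth x i * m.+1%:R) | i < d] m x.
Proof.
move=> i _; rewrite /= tnth_mktuple in_itv /= ler_pdivrMr ?ltr0n // floor_le /=.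
by rewrite ltr_pdivlMr ?ltr0n // floorD1_gt.
Qed.

Lemma grid_box_dist k m (x y : d.-tuple R) :
  grid_box k m x -> grid_box k m y -> eucl_dist x y ^+ 2 <= d%:R / m.+1%:R.
Proof.
move=> xk yk; set h := (m.+1%:R : R)^-1.
have h0 : 0 < h by rewrite invr_gt0 ltr0n.
have h1 : h <= 1 by rewrite invf_le1 ?ltr0n // ler1n.
have side i : (tnth x i - tnth y i) ^+ 2 <= h.
  have := xk i I; have := yk i I; rewrite /= !in_itv /= intrD mulrDl mul1r -/h.
  set u := (tnth k i)%:~R / m.+1%:R => /andP[y1 y2] /andP[x1 x2].
  have : tnth x i - tnth y i <= h by lra.
  have : - h <= tnth x i - tnth y i by lra.
  nra.
rewrite sqr_sqrtr ?sumr_ge0 // => [|i _]; last exact: sqr_ge0.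
apply: le_trans (ler_sum _ (fun i _ => side i)) _.
by rewrite sumr_const card_ord mulr_natl.
Qed.

Lemma eucl_open_measurable (D : set (d.-tuple R)) : eucl_open D -> measurable D.
Proof.
move=> Dopen.
pose F p := if `[< grid_box p.1 p.2 `<=` D >] then grid_box p.1 p.2 else set0.
suff -> : D = \bigcup_p F p.
  apply: countable_bigcupT_measurable; first exact: countableP.
  move=> p; rewrite /F; case: ifP => _; last exact: measurable0.
  exact: measurable_grid_box.
apply/seteqP; split => [x Dx|x [p _]]; last first.
  by rewrite /F; case: ifPn => [/asboolP|//]; apply.
have [r r0 rD] := Dopen x Dx.
pose m := Num.bound (d%:R / r ^+ 2).
have dm : d%:R / m.+1%:R < r ^+ 2.
  rewrite ltr_pdivrMr ?ltr0n // mulrC -ltr_pdivrMr ?exprn_gt0 //.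
  apply: lt_le_trans (archi_boundP _) _; first by rewrite divr_ge0 ?sqr_ge0.
  by rewrite ler_nat.
set k := [tuple Num.floor (tnth x i * m.+1%:R) | i < d].
have kD : grid_box k m `<=` D.
  move=> y ky; apply: rD.
  rewrite -(ltr_pXn2r (ltn0Sn 1)) ?nnegrE ?eucl_dist_ge0 ?ltW //.
  exact: le_lt_trans (grid_box_dist (grid_box_floor x m) ky) dm.
by exists (k, m) => //; rewrite /F /= asboolT //; exact: grid_box_floor.
Qed.

End eucl_open_measurable.

Section gauss_ball.
Context (R : realType) (d : nat).

Lemma gauss_tupleE (c x : d.-tuple R) s :
  gauss_tuple c s x = expR (- eucl_dist x c ^+ 2 / (s ^+ 2 *+ 2)).
Proof.
rewrite /gauss_tuple /normal_fun -expR_sum sqr_sqrtr ?sumr_ge0 // => [|i _]; last first.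
  exact: sqr_ge0.
by rewrite -sumrN mulr_suml.
Qed.

Definition gauss_ball (c : d.-tuple R) (s r : R) (x : d.-tuple R) : R :=
  expR (r ^+ 2 / (s ^+ 2 *+ 2)) * gauss_tuple c s x.

Lemma gauss_ball_ge0 c s r x : 0 <= gauss_ball c s r x.
Proof. by rewrite mulr_ge0 ?expR_ge0 ?gauss_tuple_ge0. Qed.

Lemma gauss_ball_ge1 c s r x : eucl_dist x c <= r -> 1 <= gauss_ball c s r x.
Proof.
move=> xc; rewrite /gauss_ball gauss_tupleE -expRD -mulrDl -expR0 ler_expR.
rewrite divr_ge0 ?mulrn_wge0 ?sqr_ge0 // subr_ge0.
by rewrite ler_sqr ?nnegrE ?eucl_dist_ge0 // (le_trans (eucl_dist_ge0 _ _) xc).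
Qed.

Lemma measurable_gauss_ball c s r : measurable_fun setT (gauss_ball c s r).
Proof. by apply: measurable_funM => //; exact: measurable_gauss_tuple. Qed.

Lemma integral_gauss_ball c s r : s != 0 ->
  (\int[tuple_lebesgue R d]_x (gauss_ball c s r x)%:E
   = (expR (r ^+ 2 / (s ^+ 2 *+ 2)) * (normal_peak s)^-1 ^+ d)%:E)%E.
Proof.
move=> s0; under eq_integral do rewrite EFinM.
rewrite ge0_integralZl_EFin ?integral_gauss_tuple ?expR_ge0 //.
- by move=> x _; rewrite lee_fin gauss_tuple_ge0.
- by apply/measurable_EFinP; exact: measurable_gauss_tuple.
Qed.

(* The width s = r / sqrt d makes the mass of [gauss_ball] comparable to the
   volume of the ball B(c, r). *)
Lemma gauss_ball_mass (r : R) : 0 < r -> (0 < d)%N ->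
  let s := r / Num.sqrt d%:R in
  expR (r ^+ 2 / (s ^+ 2 *+ 2)) * (normal_peak s)^-1 ^+ d
  = (Num.sqrt (2 * expR 1 * pi) * r / Num.sqrt d%:R) ^+ d.
Proof.
move=> r0 d0 s.
have dR : 0 < d%:R :> R by rewrite ltr0n.
have sd2 : Num.sqrt d%:R ^+ 2 = d%:R :> R by rewrite sqr_sqrtr ?ltW.
have s2 : s ^+ 2 = r ^+ 2 / d%:R by rewrite /s expr_div_n sd2.
have -> : r ^+ 2 / (s ^+ 2 *+ 2) = d%:R * 2^-1.
  by rewrite s2; field; rewrite !gt_eqF.
rewrite expRM_natl /normal_peak invrK -exprMn; congr (_ ^+ _).
have e2 : expR 2^-1 ^+ 2 = expR 1 :> R.
  by rewrite -expRM_natl mulfV ?pnatr_eq0.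
apply/eqP; rewrite -(eqrXn2 (ltn0Sn 1))
  ?mulr_ge0 ?divr_ge0 ?invr_ge0 ?expR_ge0 ?sqrtr_ge0 ?ltW //.
rewrite !exprMn e2 exprVn sd2.
rewrite !sqr_sqrtr ?mulrn_wge0 ?mulr_ge0 ?sqr_ge0 ?invr_ge0 ?expR_ge0 ?pi_ge0 ?ltW //.
by apply/eqP; field; rewrite gt_eqF.
Qed.

End gauss_ball.

Lemma ler_norm_minB (R : realDomainType) (a b a' b' c : R) :
  `|a - a'| <= c -> `|b - b'| <= c -> `|Num.min a b - Num.min a' b'| <= c.
Proof.
rewrite !ler_norml => /andP[? ?] /andP[? ?].
by rewrite !minEle; case: ifP => ?; case: ifP => ?; apply/andP; split; lra.
Qed.

Section fooling.
Context (R : realType) (d : nat) (L t : R) (z : nat -> d.-tuple R).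
Hypotheses (L0 : 0 <= L) (t0 : 0 <= t).

Fixpoint fooling (k : nat) (x : d.-tuple R) : R :=
  if k is k'.+1 then Num.min (fooling k' x) (L * eucl_dist x (z k')) else t.

Lemma fooling_ge0 k x : 0 <= fooling k x.
Proof. by elim: k => //= k IH; rewrite le_min IH mulr_ge0 ?eucl_dist_ge0. Qed.

Lemma fooling_le k x : fooling k x <= t.
Proof. by elim: k => //= k IH; rewrite ge_min IH. Qed.

Lemma fooling_node k j : (j < k)%N -> fooling k (z j) = 0.
Proof.
elim: k => // k IH; rewrite ltnS leq_eqVlt => /orP[/eqP->|jk] /=.
  by rewrite eucl_distxx mulr0; apply/min_idPr; exact: fooling_ge0.
by rewrite IH //; apply/min_idPl; rewrite mulr_ge0 ?eucl_dist_ge0.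
Qed.

Lemma fooling_lip k : lip_le (fooling k) L.
Proof.
move=> x y; elim: k => [|k IH] /=; first by rewrite subrr normr0 mulr_ge0 ?eucl_dist_ge0.
apply: ler_norm_minB => //; rewrite -mulrBr normrM ger0_norm //.
by rewrite ler_wpM2l // eucl_dist_lip.
Qed.

Lemma measurable_fooling k : measurable_fun setT (fooling k).
Proof.
elim: k => [|k IH] /=; first exact: measurable_cst.
by apply: measurable_minr IH _; apply: measurable_funM => //; exact: measurable_eucl_dist.
Qed.

Lemma fooling_lip_class k : t <= 1 ->
  lip_class L (fooling k) /\ lip_class L (fun x => - fooling k x).
Proof.
move=> t1; have bounded x : `|fooling k x| <= 1.
  by rewrite ger0_norm ?fooling_ge0 // (le_trans (fooling_le _ _)).
split; split.
- exact: bounded.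
- exact: fooling_lip.
- by move=> x; rewrite normrN.
- by move=> x y; rewrite -opprD normrN fooling_lip.
Qed.

Variables (s r : R).
Hypothesis tLr : t <= L * r.

(* Either some node is within distance r (then its bump is >= 1), or the minimum
   is >= L r >= t. *)
Lemma fooling_cover k x : t <= fooling k x + t * \sum_(j < k) gauss_ball (z j) s r x.
Proof.
elim: k => [|k IH] /=; first by rewrite big_ord0 mulr0 addr0.
rewrite big_ord_recr /= mulrDr.
have G0 := gauss_ball_ge0 (z k) s r x.
have S0 : 0 <= t * \sum_(j < k) gauss_ball (z j) s r x.
  by rewrite mulr_ge0 ?sumr_ge0 // => j _; exact: gauss_ball_ge0.
have tG0 : 0 <= t * gauss_ball (z k) s r x by rewrite mulr_ge0.
have dist0 : 0 <= L * eucl_dist x (z k) by rewrite mulr_ge0 ?eucl_dist_ge0.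
rewrite minEle; case: ifP => _; first lra.
have [near|far] := leP (eucl_dist x (z k)) r.
  have : t <= t * gauss_ball (z k) s r x by rewrite ler_peMr ?gauss_ball_ge1.
  lra.
have := le_trans tLr (ler_wpM2l L0 (ltW far)).
lra.
Qed.

End fooling.

Section integral_fooling.
Context (R : realType) (d : nat) (D : set (d.-tuple R)) (mD : measurable D)
  (volD : tuple_lebesgue R d D = 1%E) (L t s r : R) (z : nat -> d.-tuple R) (n : nat).
Hypotheses (L0 : 0 <= L) (t0 : 0 <= t) (s0 : s != 0) (tLr : t <= L * r).

Let V := expR (r ^+ 2 / (s ^+ 2 *+ 2)) * (normal_peak s)^-1 ^+ d.

Lemma integral_fooling_ge :
  (t%:E <= \int[tuple_lebesgue R d]_(x in D) (fooling L t z n x)%:E + (t * n%:R * V)%:E)%E.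
Proof.
pose g x := t * \sum_(j < n) gauss_ball (z j) s r x.
have g0 x : (0 <= (g x)%:E)%E.
  by rewrite lee_fin mulr_ge0 // sumr_ge0 // => j _; exact: gauss_ball_ge0.
have mg : measurable_fun setT (fun x => (g x)%:E).
  apply/measurable_EFinP; apply: measurable_funM => //.
  by apply: measurable_sum => j; exact: measurable_gauss_ball.
have mf : measurable_fun D (fun x => (fooling L t z n x)%:E).
  by apply/measurable_EFinP; apply: measurable_funTS; exact: measurable_fooling.
have f0 x : (0 <= (fooling L t z n x)%:E)%E by rewrite lee_fin fooling_ge0.
have int_g : (\int[tuple_lebesgue R d]_x (g x)%:E = (t * n%:R * V)%:E)%E.
  under eq_integral do rewrite EFinM -sumEFin.
  rewrite ge0_integralZl_EFin //; first last.
  - by apply: emeasurable_sum => j; apply/measurable_EFinP; exact: measurable_gauss_ball.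
  - by move=> x _; rewrite sume_ge0 // => j _; rewrite lee_fin gauss_ball_ge0.
  rewrite ge0_integral_sum //; first last.
  - by move=> j x _; rewrite lee_fin gauss_ball_ge0.
  - by move=> j; apply/measurable_EFinP; exact: measurable_gauss_ball.
  under eq_bigr do rewrite integral_gauss_ball //.
  by rewrite sumEFin sumr_const card_ord -EFinM -mulrA mulr_natl.
have sub : (\int[tuple_lebesgue R d]_(x in D) (g x)%:E
             <= \int[tuple_lebesgue R d]_x (g x)%:E)%E.
  by apply: ge0_subset_integral => // x _; exact: g0.
rewrite -int_g; apply: le_trans (leeD2l _ sub).
rewrite -ge0_integralD //; last exact: measurable_funTS.
rewrite -[t%:E]mule1 -volD -integral_cst //.
apply: ge0_le_integral => //.
- by apply: emeasurable_funD => //; exact: measurable_funTS.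
- by move=> x _; rewrite -EFinD lee_fin fooling_cover.
Qed.

End integral_fooling.

Section adversary.
Context (R : realType) (T : Type) (pts : nat -> seq R -> T).

Lemma info_fooled (f : T -> R) k :
  (forall j, (j < k)%N -> f (pts j (info pts (fun=> 0) j)) = 0) ->
  info pts f k = info pts (fun=> 0) k.
Proof.
elim: k => // k IH f0 /=.
by rewrite IH ?f0 // => j jk; apply: f0; exact: ltnW.
Qed.

(* An algorithm cannot tell [f] from [-f] when both vanish at the nodes it
   chooses for the zero function. *)
Lemma wc_error_ge_fooling (F : set (T -> R)) (S : (T -> R) -> \bar R) n phi f :
  F f -> F (fun x => - f x) -> S (fun x => - f x) = (- S f)%E ->
  (forall j, (j < n)%N -> f (pts j (info pts (fun=> 0) j)) = 0) ->
  (`|S f| <= wc_error F S n pts phi)%E.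
Proof.
move=> Ff Fnf SN f0; set A := phi (info pts (fun=> 0) n).
have err g : F g -> info pts g n = info pts (fun=> 0) n ->
    (`|S g - A%:E| <= wc_error F S n pts phi)%E.
  by move=> Fg gE; apply: ereal_sup_ubound; exists g => //; rewrite /alg gE.
have := err _ Ff (info_fooled f0).
have nf0 j : (j < n)%N -> - f (pts j (info pts (fun=> 0) j)) = 0.
  by move=> jn; rewrite f0 ?oppr0.
have := err _ Fnf (info_fooled nf0).
rewrite SN; case: (S f) => [x||]; case: (wc_error _ _ _ _ _) => [e||] //=.
  2: by move=> _ _; exact: leey.
by rewrite !lee_fin !ler_norml => /andP[? ?] /andP[? ?]; apply/andP; split; lra.
Qed.

End adversary.

Lemma S_intN (R : realType) d (D : set (d.-tuple R)) (f : d.-tuple R -> R) :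
  (forall x, 0 <= f x) -> S_int D (fun x => - f x) = (- S_int D f)%E.
Proof.
move=> f0; rewrite /S_int -tuple_lebesgueE; under eq_integral do rewrite EFinN.
rewrite integralN //; apply: fin_num_adde_defl.
rewrite integral0_eq ?oppe0 // => x _.
by rewrite (@ge0_funenegE _ _ setT) ?inE // => y _; rewrite lee_fin.
Qed.

Section lip_class_lower_bound.
Context (R : realType) (d : nat) (D : set (d.-tuple R)) (L : R).
Hypotheses (Dopen : eucl_open D) (volD : lebesgue_d D = 1%E) (L0 : 0 < L).

Lemma wc_error_lip_class_ge t s r n pts phi :
  0 <= t <= 1 -> s != 0 -> t <= L * r ->
  ((t - t * n%:R * (expR (r ^+ 2 / (s ^+ 2 *+ 2)) * (normal_peak s)^-1 ^+ d))%:E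
   <= wc_error (lip_class L) (S_int D) n pts phi)%E.
Proof.
move=> /andP[t0 t1] s0 tLr.
pose z k := pts k (info pts (fun=> 0) k).
have [Ff Fnf] := fooling_lip_class z (ltW L0) t0 n t1.
have := wc_error_ge_fooling phi Ff Fnf (S_intN D (fooling_ge0 z (ltW L0) t0 n))
  (fun j jn => fooling_node z (ltW L0) t0 jn).
apply: le_trans; rewrite /S_int -tuple_lebesgueE.
have vol_tuple : tuple_lebesgue R d D = 1%E by rewrite tuple_lebesgueE.
have := @integral_fooling_ge R d D (eucl_open_measurable Dopen) vol_tuple L t s r z n
  (ltW L0) t0 s0 tLr.
have : (0 <= \int[tuple_lebesgue R d]_(x in D) (fooling L t z n x)%:E)%E.
  by apply: integral_ge0 => x _; rewrite lee_fin (fooling_ge0 _ (ltW L0) t0).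
case: (\int[_]_(x in D) _)%E => [I||] //= => [|_ _]; last exact: leey.
by rewrite -EFinD !lee_fin => I0 tI; rewrite ger0_norm //; lra.
Qed.

Lemma info_complexity_lip_class_ge a eps :
  1 <= a -> 0 < eps -> eps < a^-1 -> (0 < d)%N ->
  (((1 - a * eps) * (a * L * Num.sqrt d%:R / (3 * Num.sqrt (2 * expR 1 * pi)))
     ^+ d)%:E <= info_complexity D (lip_class L) (S_int D) eps)%E.
Proof.
move=> a1 eps0 epsa d0.
apply: le_ereal_inf_tmp => _ [n [pts [phi [_ herr]]] <-]; rewrite lee_fin.
have a0 : 0 < a := lt_le_trans ltr01 a1.
set q := Num.sqrt (2 * expR 1 * pi).
have q0 : 0 < q by rewrite sqrtr_gt0 !mulr_gt0 ?expR_gt0 ?pi_gt0.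
have sd0 : 0 < Num.sqrt d%:R :> R by rewrite sqrtr_gt0 ltr0n.
pose t := a^-1; pose r := t / L; pose s := r / Num.sqrt d%:R.
have t01 : 0 <= t <= 1 by rewrite invr_ge0 ltW //= invf_le1.
have r0 : 0 < r by rewrite divr_gt0 ?invr_gt0.
have s0 : s != 0 by rewrite gt_eqF // divr_gt0.
have tLr : t <= L * r by rewrite /r mulrC divfK ?gt_eqF.
have := le_trans (wc_error_lip_class_ge n pts phi t01 s0 tLr) herr.
rewrite (gauss_ball_mass r0 d0) -/q lee_fin.
set V := (q * r / Num.sqrt d%:R) ^+ d; set K := (_ / (3 * q)) ^+ d.
rewrite -mulrA -{1}(mulr1 t) -mulrBr /t ler_pdivrMl // lerBlDr -lerBlDl => err.
have VK : V * K <= 1.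
  have base : q * r / Num.sqrt d%:R * (a * L * Num.sqrt d%:R / (3 * q)) = 3^-1.
    by rewrite /r /t; field; rewrite !gt_eqF.
  by rewrite /V /K -exprMn base exprn_ile1 ?invr_ge0 ?invf_le1 ?ler1n.
have K0 : 0 <= K by rewrite exprn_ge0 // divr_ge0 ?mulr_ge0 ?ltW.
apply: le_trans (ler_wpM2r K0 err) _.
by rewrite -mulrA ler_piMr.
Qed.

End lip_class_lower_bound.

Lemma limn_esup_gt0_frequently (R : realType) (u : nat -> R) :
  (0 < limn_esup (fun n => (u n)%:E))%E ->
  exists2 c : R, 0 < c & forall N, exists2 n, (N <= n)%N & c < u n.
Proof.
move=> lim0.
have [c c0 clim] : exists2 c : R, 0 < c & (c%:E < limn_esup (fun n => (u n)%:E))%E.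
  move: lim0; case: (limn_esup _) => [x| |] //.
    rewrite lte_fin => x0; exists (x / 2); rewrite ?divr_gt0 // lte_fin.
    by rewrite ltr_pdivrMr // ltr_pMr // ltr1n.
  by move=> _; exists 1; rewrite ?ltry.
exists c => // N.
have : (limn_esup (fun n => (u n)%:E) <= esups (fun n => (u n)%:E) N)%E.
  rewrite limn_esup_lim (cvg_lim _ (@cvg_esups_inf R (fun n => (u n)%:E))) //.
  by apply: ereal_inf_lbound; exists N.
move=> /(lt_le_trans clim) /ereal_sup_gt[_ [n Nn <-]].
by rewrite lte_fin => cn; exists n.
Qed.

Lemma curse_of_dimensionality (R : realType) (n : nat -> R -> \bar R) (u : nat -> R)
    (q : R) : 0 < q ->
  (forall (a eps : R) d, 1 <= a -> 0 < eps -> eps < a^-1 -> (0 < d)%N ->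
     (((1 - a * eps) * (a * u d / (3 * q)) ^+ d)%:E <= n d eps)%E) ->
  (0 < limn_esup (fun d => (u d)%:E))%E ->
  exists c eps0 gamma : R, [/\ 0 < c, 0 < eps0 & 0 < gamma] /\
    forall N, exists2 d, (N <= d)%N & (0 < d)%N /\
      forall eps, 0 < eps -> eps <= eps0 -> ((c * (1 + gamma) ^+ d)%:E <= n d eps)%E.
Proof.
move=> q0 lb /limn_esup_gt0_frequently[c c0 cu].
(* With a = 1 + 6q/c we get a u_d / (3q) >= 2 whenever u_d > c, and
   eps <= 1/(2a) keeps 1 - a eps >= 1/2. *)
pose a := 1 + 6 * q / c.
have a1 : 1 <= a by rewrite lerDl divr_ge0 // ?mulr_ge0 // ltW.
have a0 : 0 < a := lt_le_trans ltr01 a1.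
exists 2^-1, (2 * a)^-1, 1; split; first by split; rewrite // invr_gt0 mulr_gt0.
move=> N; have [d dN cd] := cu (maxn N 1).
exists d; first exact: leq_trans (leq_maxl _ _) dN.
split=> [|eps eps0 epsa]; first exact: leq_trans (leq_maxr _ _) dN.
have aeps : a * eps <= 2^-1.
  rewrite (_ : 2^-1 = a * (2 * a)^-1) ?ler_pM2l //.
  by field; rewrite gt_eqF.
have ac : 6 * q <= a * c.
  have -> : a * c = c + 6 * q by rewrite /a; field; rewrite gt_eqF.
  by rewrite lerDr ltW.
have base : 2 <= a * u d / (3 * q).
  rewrite ler_pdivlMr ?mulr_gt0 //; apply: le_trans (ler_wpM2l (ltW a0) (ltW cd)).
  lra.
apply: le_trans (lb a eps d a1 eps0 _ (leq_trans (leq_maxr _ _) dN)); last first.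
  apply: le_lt_trans epsa _; rewrite ltf_pV2 ?posrE ?mulr_gt0 //.
  by rewrite ltr_pMl // ltr1n.
rewrite lee_fin (_ : 1 + 1 = 2) //; apply: ler_pM; rewrite ?exprn_ge0 //; first lra.
by apply: lerXn2r; rewrite ?nnegrE //; lra.
Qed.

Unset Implicit Arguments.

Theorem proposition3p2 (R : realType)
  (D : forall d : nat, set (d.-tuple R)) (L : nat -> R)
  (hDopen : forall d, (0 < d)%N -> eucl_open (D d))
  (hDvol : forall d, (0 < d)%N -> lebesgue_d (D d) = 1%E)
  (hL : forall d, (0 < d)%N -> 0 < L d) :
  (forall (a eps : R) (d : nat), 1 <= a -> 0 < eps -> eps < a^-1 -> (0 < d)%N ->
     (((1 - a * eps) *
        (a * L d * Num.sqrt d%:R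
          / (3 * Num.sqrt (2 * expR 1 * pi))) ^+ d)%:E
      <= info_complexity (D d) (@lip_class R d (L d)) (S_int (D d)) eps)%E)
  /\
  ((0 < limn_esup (fun d => (L d * Num.sqrt d%:R)%:E))%E ->
    exists c eps0 gamma : R, [/\ 0 < c, 0 < eps0 & 0 < gamma] /\
      forall N : nat, exists2 d : nat, (N <= d)%N & (0 < d)%N /\
        forall eps : R, 0 < eps -> eps <= eps0 ->
          ((c * (1 + gamma) ^+ d)%:E
           <= info_complexity (D d) (@lip_class R d (L d)) (S_int (D d)) eps)%E).
Proof.
have lb := fun a eps d a1 eps0 epsa d0 =>
  @info_complexity_lip_class_ge R d (D d) (L d) (hDopen d d0) (hDvol d d0) (hL d d0)
    a eps a1 eps0 epsa d0.
split=> //; apply: (curse_of_dimensionality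
  (n := fun d => info_complexity (D d) (lip_class (L d)) (S_int (D d)))
  (u := fun d => L d * Num.sqrt d%:R) (q := Num.sqrt (2 * expR 1 * pi))).
- by rewrite sqrtr_gt0 !mulr_gt0 ?expR_gt0 ?pi_gt0.
- by move=> a eps d a1 eps0 epsa d0; rewrite mulrA; exact: lb.
Qed.
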